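(* Let $\mathcal G$ be an ample groupoid and define the relation $\rho$ on $A_{\mathbb B}(\mathcal G)$ by $f\,\rho\,g$ iff $\operatorname{Eq}(f,g)=\{\alpha\in\mathcal G: f(\alpha)=g(\alpha)\}$ is dense in $\mathcal G$. Then (1) $\rho$ is a congruence on $A_{\mathbb B}(\mathcal G)$; (2) if in addition $\mathcal G$ is topologically principal, then $\rho$ coincides with the congruence $\equiv$ on $A_{\mathbb B}(\mathcal G)$.
   Context: $\mathbb B=(\{0,1\},\text{or},\text{and})$ is the Boolean semifield. An ample groupoid is a topological groupoid whose unit space $\mathcal G^{(0)}$ is locally compact Hausdorff and totally disconnected and whose source and range maps $s,r$ are local homeomorphisms ($\mathcal G$ need not be Hausdorff). The Steinberg algebra $A_{\mathbb B}(\mathcal G)$ is the set of $\mathbb B$-valued functions on $\mathcal G$ that are finite sums of characteristic functions $1_U$ of compact open bisections, with pointwise addition and convolution $(f*g)(\gamma)=\sum_{\alpha\beta=\gamma}f(\alpha)g(\beta)$. $\mathcal T$ is the set of units $u$ whose isotropy group $\{\gamma:s(\gamma)=r(\gamma)=u\}$ is trivial; $\mathcal G$ is topologically principal if $\mathcal T$ is dense in $\mathcal G^{(0)}$. The relation $\equiv$ is defined by $f\equiv g$ iff $f(\alpha)=g(\alpha)$ for all $\alpha$ with $s(\alpha),r(\alpha)\in\mathcal T$. A congruence is an equivalence relation compatible with addition and with left and right multiplication. *)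

From mathcomp Require Import all_boot all_order.
From mathcomp Require Import all_classical all_reals all_analysis.
Set Implicit Arguments. Unset Strict Implicit. Unset Printing Implicit Defensive.
Local Open Scope classical_set_scope.

(** Algebraic groupoid: a small category with inverses, described by source,
    range, (partial) multiplication and inverse.  [mul a b] is meaningful only
    when [a], [b] are composable, i.e. [src a = rng b]. *)
Record groupoid (G : Type) := Groupoid {
  src : G -> G;
  rng : G -> G;
  mul : G -> G -> G;
  inv : G -> G;
  src_src : forall a, src (src a) = src a;
  rng_src : forall a, rng (src a) = src a;
  src_rng : forall a, src (rng a) = rng a;
  rng_rng : forall a, rng (rng a) = rng a;
  src_mul : forall a b, src a = rng b -> src (mul a b) = src b;
  rng_mul : forall a b, src a = rng b -> rng (mul a b) = rng a;
  mulA : forall a b c, src a = rng b -> src b = rng c ->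
    mul (mul a b) c = mul a (mul b c);
  mul_rng : forall a, mul (rng a) a = a;
  mul_src : forall a, mul a (src a) = a;
  src_inv : forall a, src (inv a) = rng a;
  rng_inv : forall a, rng (inv a) = src a;
  mulV : forall a, mul a (inv a) = rng a;
  mulVl : forall a, mul (inv a) a = src a
}.

Section Ample.
Variables (G : topologicalType) (g : groupoid G).

Definition units : set G := [set u | src g u = u].

Definition open_in_units (W : set G) : Prop :=
  W `<=` units /\ exists O : set G, open O /\ W = O `&` units.

Definition local_homeo_at (f : G -> G) (U : set G) : Prop :=
  [/\ open U,
      {in U &, injective f},
      {within U, continuous f},
      open_in_units (f @` U) &
      forall V : set G, open V -> open_in_units (f @` (U `&` V))].

Definition local_homeomorphism (f : G -> G) : Prop :=
  forall x : G, exists U : set G, U x /\ local_homeo_at f U.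

Definition topological_groupoid : Prop :=
  {within [set p : G * G | src g p.1 = rng g p.2],
     continuous (fun p : G * G => mul g p.1 p.2)} /\
  continuous (inv g).

Definition units_hausdorff : Prop :=
  forall x y, units x -> units y -> x <> y ->
    exists U V : set G, [/\ open U, open V, U x, V y &
      U `&` V `&` units = set0].

Definition units_locally_compact : Prop :=
  forall x, units x -> exists K : set G, exists W : set G,
    [/\ K `<=` units, compact K, open W, W x & W `&` units `<=` K].

Definition ample : Prop :=
  [/\ topological_groupoid /\ units_hausdorff,
      units_locally_compact,
      totally_disconnected units,
      local_homeomorphism (src g) &
      local_homeomorphism (rng g)].

Definition bisection (U : set G) : Prop :=
  {in U &, injective (src g)} /\ {in U &, injective (rng g)}.

Definition compact_open_bisection (U : set G) : Prop :=
  [/\ compact U, open U & bisection U].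

(** Steinberg algebra over the Boolean semifield: finite sums (= pointwise
    "or") of characteristic functions of compact open bisections *)
Definition steinberg (f : G -> bool) : Prop :=
  exists (n : nat) (U : nat -> set G),
    (forall i, (i < n)%N -> compact_open_bisection (U i)) /\
    forall x, f x = true <-> exists2 i, (i < n)%N & U i x.

Definition Badd (f h : G -> bool) : G -> bool := fun x => f x || h x.

(** convolution over B: (f*h)(γ) = ∑_{αβ=γ} f α h β *)
Definition Bconv (f h : G -> bool) : G -> bool := fun x =>
  `[< exists a b, [/\ src g a = rng g b, mul g a b = x, f a & h b] >].

Definition congruence (R : (G -> bool) -> (G -> bool) -> Prop) : Prop :=
  [/\ (forall f, steinberg f -> R f f),
      (forall f h, steinberg f -> steinberg h -> R f h -> R h f),
      (forall f h k, steinberg f -> steinberg h -> steinberg k ->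
          R f h -> R h k -> R f k) &
      (forall f h k, steinberg f -> steinberg h -> steinberg k -> R f h ->
          [/\ R (Badd f k) (Badd h k),
              R (Bconv k f) (Bconv k h) &
              R (Bconv f k) (Bconv h k)])].

Definition rho (f h : G -> bool) : Prop := dense [set a | f a = h a].

Definition trivial_isotropy : set G :=
  [set u | units u /\ forall a, src g a = u -> rng g a = u -> a = u].

Definition topologically_principal : Prop :=
  forall O : set G, open O -> O `&` units !=set0 ->
    O `&` trivial_isotropy !=set0.

Definition Tequiv (f h : G -> bool) : Prop :=
  forall a, trivial_isotropy (src g a) -> trivial_isotropy (rng g a) ->
    f a = h a.

End Ample.

From Pilot Require Import Defs.
From mathcomp Require Import all_boot all_order.
From mathcomp Require Import all_classical all_reals all_analysis.
Set Implicit Arguments. Unset Strict Implicit. Unset Printing Implicit Defensive.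
Local Open Scope classical_set_scope.

(** Steinberg functions have open support, so they are locally constant on an
    open dense set; hence [rho f h] upgrades to: Eq(f,h) has dense interior.  For left convolution by a compact open bisection [U], the
    only factorisation [y = a b] with [a] in [U] is [b = a^-1 y]; the local
    homeomorphisms [s], [r] let [a] move continuously with [y], so agreement of
    [f], [h] on an open dense set transfers to [1_U * f], [1_U * h].  Finite
    intersections of sets with dense interior keep dense interior, which
    handles a finite union of bisections; right convolution follows by the
    symmetry [(f * k)(y) = (k^* * f^* )(y^-1)] under the homeomorphism [inv].
    For part (2): [s] is open, so topological principality makes arrows with
    trivial-isotropy source dense, giving [Tequiv -> rho]; conversely, a point
    of the closure of a compact set whose range has trivial isotropy lies in
    the set (the unit space being Hausdorff), giving [rho -> Tequiv]. *)

Section DenseInterior.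
Variable T : topologicalType.

Lemma open_nbhs_subset (x : T) (A : set T) :
  nbhs x A -> exists B, [/\ open B, B x & B `<=` A].
Proof.
move=> /nbhs_interior xA; exists A°; split; first exact: open_interior.
  exact: nbhs_singleton.
exact: interior_subset.
Qed.

Lemma denseS (S S' : set T) : S `<=` S' -> dense S -> dense S'.
Proof.
move=> SS' dS V V0 oV; have [x [Vx Sx]] := dS V V0 oV.
by exists x; split => //; exact: SS'.
Qed.

Lemma dense_interiorS (S S' : set T) : S `<=` S' -> dense S° -> dense S'°.
Proof. by move=> SS'; apply: denseS; exact: interiorS. Qed.

Lemma dense_interiorI (S1 S2 : set T) : dense S1° -> dense S2° -> dense (S1 `&` S2)°.
Proof. by rewrite interiorI; apply: denseI; exact: open_interior. Qed.

Lemma dense_interior_bigcap (n : nat) (S : nat -> set T) :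
  (forall i, (i < n)%N -> dense (S i)°) -> dense (\bigcap_(i < n) S i)°.
Proof.
move=> dS; rewrite bigcap_mkord; elim/big_ind: _ => //.
- by rewrite interiorT => V V0 _; rewrite setIT.
- exact: dense_interiorI.
- by move=> i _; exact: dS.
Qed.

Lemma dense_interiorP (S : set T) :
  (forall W, open W -> W !=set0 ->
     exists W', [/\ open W', W' !=set0, W' `<=` W & W' `<=` S]) -> dense S°.
Proof.
move=> hS V V0 oV; have [W' [oW' [y W'y] W'V W'S]] := hS V oV V0.
exists y; split; first exact: W'V.
by move: W'y; rewrite open_subsetE in W'S => // /W'S.
Qed.

(** A continuous involution is a homeomorphism, so preimages under it keep
    dense interior. *)
Lemma dense_interior_preimage (phi : T -> T) (S : set T) :
  continuous phi -> involutive phi -> dense S° -> dense (phi @^-1` S)°.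
Proof.
move=> cphi phiK dS.
apply: (dense_interiorS (S := phi @^-1` S°)); first by move=> x /interior_subset.
have -> : (phi @^-1` S°)° = phi @^-1` S°.
  by apply/interior_id; apply: open_comp (open_interior _) => x _; exact: cphi.
move=> V [x Vx] oV.
have oV' : open (phi @^-1` V) by apply: open_comp => // z _; exact: cphi.
have V'0 : phi @^-1` V !=set0 by exists (phi x); rewrite /= phiK.
have [y [Vy Sy]] := dS _ V'0 oV'.
by exists (phi y); split => //=; rewrite phiK.
Qed.
End DenseInterior.

Section GroupoidAlgebra.
Variables (G : Type) (g : groupoid G).
Local Notation s := (src g).
Local Notation r := (rng g).
Local Notation mul := (Pilot.Defs.mul g).
Local Notation inv := (Pilot.Defs.inv g).

Lemma gmulKV a b : s a = r b -> mul (inv a) (mul a b) = b.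
Proof. by move=> ab; rewrite -mulA ?src_inv // mulVl ab mul_rng. Qed.

Lemma gmulVK a c : r a = r c -> mul a (mul (inv a) c) = c.
Proof. by move=> ac; rewrite -mulA ?rng_inv ?src_inv // mulV ac mul_rng. Qed.

Lemma gmulKVr a b : s b = r a -> mul (mul b a) (inv a) = b.
Proof. by move=> ba; rewrite mulA ?rng_inv // mulV -ba mul_src. Qed.

Lemma gmulVKr a c : s c = s a -> mul (mul c (inv a)) a = c.
Proof. by move=> ca; rewrite mulA ?rng_inv ?src_inv // mulVl -ca mul_src. Qed.

Lemma ginvK : involutive inv.
Proof.
move=> a; have := gmulKV (src_inv g a); rewrite mulVl => aK.
by rewrite -{2}aK -(rng_inv g a) -src_inv mul_src.
Qed.

Lemma ginv_mul a b : s a = r b -> inv (mul a b) = mul (inv b) (inv a).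
Proof.
move=> ab; have ab_r : r (mul a b) = r a by rewrite rng_mul.
have prod_inv : mul (mul a b) (mul (inv b) (inv a)) = r a.
  by rewrite mulA ?rng_mul ?rng_inv ?src_inv // gmulVK ?rng_inv // mulV.
rewrite -(gmulKV (a := mul a b) (b := mul (inv b) (inv a))); last first.
  by rewrite rng_mul ?rng_inv ?src_inv ?src_mul.
by rewrite prod_inv -ab_r -src_inv mul_src.
Qed.
End GroupoidAlgebra.

Section TopologicalGroupoid.
Variables (G : topologicalType) (g : groupoid G).
Local Notation s := (src g).
Local Notation r := (rng g).
Local Notation mul := (Pilot.Defs.mul g).
Local Notation inv := (Pilot.Defs.inv g).

Lemma units_rng a : units g (r a).
Proof. exact: src_rng. Qed.

Lemma lh_continuous (t : G -> G) : local_homeomorphism g t -> continuous t.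
Proof.
move=> lh x; have [U [Ux [oU _ + _ _]]] := lh x.
by rewrite continuous_open_subspace // => /(_ x); apply; rewrite inE.
Qed.

Lemma lh_open_map (t : G -> G) (V : set G) :
  local_homeomorphism g t -> open V -> open_in_units g (t @` V).
Proof.
move=> lh oV.
have tV_units : t @` V `<=` units g.
  move=> _ [z Vz <-]; have [W [Wz [_ _ _ _ /(_ V oV) [+ _]]]] := lh z.
  by apply; exists z.
split => //.
exists (\bigcup_(Q in [set Q | open Q /\ Q `&` units g `<=` t @` V]) Q); split.
  by apply: bigcup_open => Q [].
apply/seteqP; split; last by move=> y [[Q [_ QV] Qy] uy]; apply: QV.
move=> _ [z Vz <-]; have [W [Wz [_ _ _ _ /(_ V oV) [_ [Q [oQ WVE]]]]]] := lh z.
have tWV : (t @` (W `&` V)) (t z) by exists z.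
split; last exact: tV_units.
exists Q; last by move: tWV; rewrite WVE => -[].
by split=> // y; rewrite -WVE => -[w [_ Vw] <-]; exists w.
Qed.

Definition fibred_continuous (t t' : G -> G) (m : G -> G -> G) : Prop :=
  forall x a, t a = t' x -> forall N, nbhs (m x a) N ->
    exists C A, [/\ nbhs x C, nbhs a A &
      forall y b, C y -> A b -> t b = t' y -> N (m y b)].

Lemma fibred_continuous_mul :
  topological_groupoid g -> fibred_continuous s r (fun x a => mul a x).
Proof.
move=> [cmul _] x a ax N mxaN.
have /subspace_continuousP /(_ (a, x) ax N mxaN) := cmul.
move=> /open_nbhs_subset [B [oB Bax BN]].
have [[A C] /= [aA xC] AC_B] := open_nbhs_nbhs (conj oB Bax).
exists C, A; split => // y b Cy Ab by_.
by apply: (BN (b, y)) => //; apply: AC_B.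
Qed.

Lemma fibred_continuous_divl :
  topological_groupoid g -> fibred_continuous r r (fun x a => mul (inv a) x).
Proof.
move=> tg x a ax N hN.
have [C [A [xC aA sub]]] := fibred_continuous_mul tg (etrans (src_inv g a) ax) hN.
exists C, (inv @^-1` A); split => //; first by case: tg => _; apply.
by move=> y b Cy Ab by_; apply: sub; rewrite ?src_inv.
Qed.

(** Local sections: if [t] maps open sets onto open subsets of the unit space
    and [m] is fibred-continuous, a partner [a] in [U] of [x] can be moved
    continuously with [x], keeping [m x a] in a prescribed neighbourhood. *)
Lemma local_section (t t' : G -> G) (m : G -> G -> G) (U : set G) :
  (forall V, open V -> open_in_units g (t @` V)) ->
  (forall x, units g (t' x)) -> continuous t' -> fibred_continuous t t' m ->
  open U -> forall x a, U a -> t a = t' x -> forall N, nbhs (m x a) N ->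
  exists M, [/\ open M, M x &
    forall y, M y -> exists b, [/\ U b, t b = t' y & N (m y b)]].
Proof.
move=> topen t'units ct' mcont oU x a Ua ax N mxaN.
have [C [A [xC aA CA_N]]] := mcont x a ax N mxaN.
have [A' [oA' A'a A'A]] := open_nbhs_subset aA.
have [C' [oC' C'x C'C]] := open_nbhs_subset xC.
have [_ [Q [oQ QE]]] := topen (U `&` A') (openI oU oA').
have Qt'x : Q (t' x).
  have : (t @` (U `&` A')) (t a) by exists a.
  by rewrite QE ax => -[].
exists (C' `&` t' @^-1` Q); split => //.
  by apply: openI => //; apply: open_comp => // z _; exact: ct'.
move=> y [C'y Qt'y]; have : (Q `&` units g) (t' y) by [].
rewrite -QE => -[b [Ub A'b] tb]; exists b; split => //.
exact: CA_N (C'C _ C'y) (A'A _ A'b) tb.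
Qed.
End TopologicalGroupoid.

Section Convolution.
Variables (G : topologicalType) (g : groupoid G).
Local Notation s := (src g).
Local Notation r := (rng g).
Local Notation mul := (Pilot.Defs.mul g).
Local Notation inv := (Pilot.Defs.inv g).

Definition char_fun (U : set G) : G -> bool := fun x => `[< U x >].

(** Convolution by [k = 1_(U_0) + ... + 1_(U_(n-1))] is the sum of the
    convolutions by the [1_(U_i)], so agreement for each [i] gives agreement
    for [k]. *)
Lemma Bconv_eq_bigcap (k f h : G -> bool) (n : nat) (U : nat -> set G) :
  (forall x, k x = true <-> exists2 i, (i < n)%N & U i x) ->
  \bigcap_(i < n) [set y | Bconv g (char_fun (U i)) f y = Bconv g (char_fun (U i)) h y]
  `<=` [set y | Bconv g k f y = Bconv g k h y].
Proof.
move=> kE y eqy.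
suff imp f1 f2 : (forall i, (i < n)%N ->
    Bconv g (char_fun (U i)) f1 y = Bconv g (char_fun (U i)) f2 y) ->
    Bconv g k f1 y -> Bconv g k f2 y.
  apply/idP/idP; apply: imp => i /eqy //= ->.
move=> eq12 /asboolP [a [b [ab aby ka f1b]]]; have [i ni Uia] := (kE a).1 ka.
have : Bconv g (char_fun (U i)) f1 y by apply/asboolP; exists a, b; split => //; exact/asboolP.
rewrite eq12 // => /asboolP [a' [b' [ab' aby' /asboolP Uia' f2b']]].
by apply/asboolP; exists a', b'; split => //; apply/kE; exists i.
Qed.

(** Left convolution by an [r]-injective set [U] containing [a] over [r y]:
    the only factorisation [y = a' b] with [a'] in [U] is [a' = a],
    [b = a^-1 y]. *)
Lemma Bconv_char_at (U : set G) (f : G -> bool) a y :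
  {in U &, injective r} -> U a -> r a = r y ->
  Bconv g (char_fun U) f y = f (mul (inv a) y).
Proof.
move=> rinj Ua ay; apply/asboolP/idP.
  move=> [a' [b [a'b a'by /asboolP Ua' fb]]].
  have a'a : a' = a by apply: rinj; rewrite ?inE // ay -a'by rng_mul.
  by rewrite -a'by a'a gmulKV // -a'a.
move=> fb; exists a, (mul (inv a) y); split => //; last exact/asboolP.
- by rewrite rng_mul ?rng_inv // src_inv.
- exact: gmulVK.
Qed.

Lemma Bconv_char_off (U : set G) (f : G -> bool) y :
  (forall a, U a -> r a <> r y) -> Bconv g (char_fun U) f y = false.
Proof.
move=> noU; apply/asboolP => -[a [b [ab aby /asboolP Ua _]]].
by apply: (noU a Ua); rewrite -aby rng_mul.
Qed.

(** Near a point where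
    [U] acts, a continuous choice of the factor in [U] reduces the claim to
    agreement of [f] and [h] on the right factor. *)
Lemma rho_conv_char_left (U : set G) (f h : G -> bool) :
  ample g -> open U -> {in U &, injective r} ->
  dense [set b | f b = h b]° ->
  dense [set y | Bconv g (char_fun U) f y = Bconv g (char_fun U) h y]°.
Proof.
move=> [[tg _] _ _ lhs lhr] oU rinj dEq; set D := [set b | f b = h b]°.
have good : [set y | forall a, U a -> r a = r y -> D (mul (inv a) y)]
    `<=` [set y | Bconv g (char_fun U) f y = Bconv g (char_fun U) h y].
  move=> y Dy /=; case: (pselect (exists2 a, U a & r a = r y)) => [[a Ua ay]|noU].
    by rewrite !(Bconv_char_at _ rinj Ua ay); exact: interior_subset (Dy a Ua ay).
  by rewrite !Bconv_char_off // => a Ua ay; apply: noU; exists a.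
apply: dense_interiorS good _; apply: dense_interiorP => W oW [w Ww].
case: (pselect (exists y0 a0, [/\ W y0, U a0 & r a0 = r y0])); last first.
  move=> noU; exists W; split => //; first by exists w.
  by move=> y Wy a Ua ay; exfalso; apply: noU; exists y, a.
move=> [y0 [a0 [Wy0 Ua0 a0y0]]].
(* first move the right factor [b0] into [D], keeping the product in [W] *)
set b0 := mul (inv a0) y0.
have a0b0 : s a0 = r b0 by rewrite rng_mul ?rng_inv // src_inv.
have Wa0b0 : nbhs (mul a0 b0) W by rewrite gmulVK //; exact: open_nbhs_nbhs.
have [M [oM Mb0 MW]] := local_section (fun V oV => lh_open_map lhs oV)
  (@units_rng _ g) (lh_continuous lhr) (fibred_continuous_mul tg) oU Ua0 a0b0 Wa0b0.
have [b1 [Mb1 Db1]] := dEq M (ex_intro _ b0 Mb0) oM.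
have [a1 [Ua1 a1b1 Wy1]] := MW b1 Mb1.
(* then keep the right factor of every [y] near [y1 = a1 b1] inside [D] *)
set y1 := mul a1 b1; have a1y1 : r a1 = r y1 by rewrite rng_mul.
have Dy1 : nbhs (mul (inv a1) y1) D.
  by rewrite gmulKV //; apply: open_nbhs_nbhs; split => //; exact: open_interior.
have [M' [oM' M'y1 M'D]] := local_section (fun V oV => lh_open_map lhr oV)
  (@units_rng _ g) (lh_continuous lhr) (fibred_continuous_divl tg) oU Ua1 a1y1 Dy1.
exists (M' `&` W); split; [exact: openI | by exists y1 | by move=> ? []|].
move=> y [M'y _] a Ua ay; have [b [Ub by_ Db]] := M'D y M'y.
by have -> : a = b by apply: rinj; rewrite ?inE // ay by_.
Qed.

Lemma rho_conv_left (k f h : G -> bool) (n : nat) (U : nat -> set G) :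
  ample g -> (forall i, (i < n)%N -> open (U i) /\ {in U i &, injective r}) ->
  (forall x, k x = true <-> exists2 i, (i < n)%N & U i x) ->
  dense [set b | f b = h b]° -> dense [set y | Bconv g k f y = Bconv g k h y]°.
Proof.
move=> am hU kE dEq; apply: dense_interiorS (Bconv_eq_bigcap kE) _.
apply: dense_interior_bigcap => i ni; have [oU rinj] := hU i ni.
exact: rho_conv_char_left.
Qed.

Lemma Bconv_inv (f k : G -> bool) y :
  Bconv g f k y = Bconv g (k \o inv) (f \o inv) (inv y).
Proof.
apply/asboolP/asboolP => -[a [b [ab aby fa kb]]].
  exists (inv b), (inv a); split => /=.
  - by rewrite src_inv rng_inv.
  - by rewrite -aby ginv_mul.
  - by rewrite ginvK.
  - by rewrite ginvK.
exists (inv b), (inv a); split => //.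
- by rewrite src_inv rng_inv.
- by rewrite -ginv_mul ?aby ?ginvK.
Qed.

(** Right convolution, by symmetry under the homeomorphism [inv]. *)
Lemma rho_conv_right (k f h : G -> bool) (n : nat) (U : nat -> set G) :
  ample g -> (forall i, (i < n)%N -> open (U i) /\ {in U i &, injective s}) ->
  (forall x, k x = true <-> exists2 i, (i < n)%N & U i x) ->
  dense [set b | f b = h b]° -> dense [set y | Bconv g f k y = Bconv g h k y]°.
Proof.
move=> am hU kE dEq; have cinv : continuous inv by move: am => [[[_ ?] _] _ _ _ _].
have -> : [set y | Bconv g f k y = Bconv g h k y] = inv @^-1`
    [set y | Bconv g (k \o inv) (f \o inv) y = Bconv g (k \o inv) (h \o inv) y].
  by apply/seteqP; split => y /=; rewrite (Bconv_inv f) (Bconv_inv h).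
apply: (dense_interior_preimage cinv (@ginvK _ g)).
apply: (rho_conv_left (U := fun i => inv @^-1` U i)) => //.
- move=> i ni; have [oU sinj] := hU i ni; split.
    by apply: open_comp oU => z _; exact: cinv.
  move=> x y; rewrite !inE => Ux Uy rxy; apply: (can_inj (@ginvK _ g)).
  by apply: sinj; rewrite ?inE ?src_inv.
- by move=> x; exact: kE.
- exact: dense_interior_preimage cinv (@ginvK _ g) dEq.
Qed.
End Convolution.

Section LocallyConstant.
Variable T : topologicalType.

Definition locally_constant_at (f : T -> bool) (x : T) : Prop :=
  exists W, [/\ open W, W x & forall y, W y -> f y = f x].

Lemma open_locally_constant (f : T -> bool) : open (locally_constant_at f).
Proof.
rewrite openE; move=> x [W [oW Wx Wf]].
apply: (@filterS _ _ _ W); last exact: open_nbhs_nbhs.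
by move=> y Wy; exists W; split => // z Wz; rewrite !Wf.
Qed.

(** A boolean function with open support is locally constant on a dense set:
    on its support, and on the complement of its closure. *)
Lemma dense_locally_constant (f : T -> bool) :
  open [set x | f x] -> dense (locally_constant_at f).
Proof.
move=> opf V [x Vx] oV; case: (pselect (exists2 y, V y & f y)) => [[y Vy fy]|nof].
  exists y; split => //; exists [set x | f x]; split => // z fz.
  by rewrite fz fy.
have fF z : V z -> f z = false by move=> Vz; apply/negP => fz; apply: nof; exists z.
by exists x; split => //; exists V; split => // z Vz; rewrite !fF.
Qed.

Lemma dense_interior_agree (f h : T -> bool) :
  open [set x | f x] -> open [set x | h x] ->
  dense [set x | f x = h x] -> dense [set x | f x = h x]°.
Proof.
move=> opf oph dEq; set L := locally_constant_at f `&` locally_constant_at h.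
have oL : open L by apply: openI; exact: open_locally_constant.
apply: (dense_interiorS (S := L)).
  move=> x [[W1 [oW1 W1x W1f]] [W2 [oW2 W2x W2h]]].
  have [|y [[W1y W2y] fhy]] := dEq (W1 `&` W2) _ (openI oW1 oW2).
    by exists x.
  by rewrite /= -(W1f y W1y) -(W2h y W2y).
rewrite (interior_id L).1 //; apply: denseI => //; first exact: open_locally_constant.
  exact: dense_locally_constant.
exact: dense_locally_constant.
Qed.
End LocallyConstant.

Section Congruence.
Variables (G : topologicalType) (g : groupoid G).

(** A Steinberg function has open support, a finite union of open
    bisections; so [rho] between Steinberg functions means that their
    agreement set has dense interior. *)
Lemma steinberg_support_open (f : G -> bool) : steinberg g f -> open [set x | f x].
Proof.
move=> [n [U [hU fE]]].
have -> : [set x | f x] = \bigcup_(i in [set i | (i < n)%N]) U i.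
  by apply/seteqP; split => x /fE.
by apply: bigcup_open => i ni; case: (hU i ni).
Qed.

Lemma steinberg_dense_interior (f h : G -> bool) :
  steinberg g f -> steinberg g h -> rho f h -> dense [set x | f x = h x]°.
Proof.
by move=> sf sh; apply: dense_interior_agree; exact: steinberg_support_open.
Qed.

Lemma rho_congruence : ample g -> congruence g (@rho G).
Proof.
move=> am; split.
- by move=> f _ V [x Vx] _; exists x.
- by move=> f h _ _; apply: denseS => x /= ->.
- move=> f h k sf sh _ fh hk.
  apply: (denseS (S := [set x | f x = h x]° `&` [set x | h x = k x])).
    by move=> x [/interior_subset /= -> ->].
  by apply: denseI => //; [exact: open_interior|exact: steinberg_dense_interior].
move=> f h k sf sh [n [U [hU kE]]] fh.
have dEq := steinberg_dense_interior sf sh fh; split.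
- by apply: denseS fh => x /=; rewrite /Badd => ->.
- apply: (denseS (@interior_subset _ _)).
  apply: rho_conv_left am _ kE dEq => i ni.
  by have [_ oU [_ rinj]] := hU i ni.
- apply: (denseS (@interior_subset _ _)).
  apply: rho_conv_right am _ kE dEq => i ni.
  by have [_ oU [sinj _]] := hU i ni.
Qed.
End Congruence.

Section TrivialIsotropy.
Variables (G : topologicalType) (g : groupoid G).
Local Notation s := (src g).
Local Notation r := (rng g).
Local Notation mul := (Pilot.Defs.mul g).
Local Notation inv := (Pilot.Defs.inv g).

(** Trivial isotropy is invariant along arrows: conjugating an isotropy
    element at [r a] by [a] gives one at [s a]. *)
Lemma trivial_isotropy_rng a :
  trivial_isotropy g (s a) -> trivial_isotropy g (r a).
Proof.
move=> [_ Ts]; split=> [|c sc rc]; first exact: units_rng.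
set d := mul c a.
have sd : s d = s a by rewrite src_mul.
have rd : r d = r a by rewrite rng_mul.
have a_d : mul (inv a) d = s a.
  by apply: Ts; rewrite ?src_mul ?rng_mul ?src_inv ?rng_inv ?sd ?rd.
have da : d = a by rewrite -[LHS](gmulVK (esym rd)) a_d mul_src.
by rewrite -[LHS](gmulKVr sc) -/d da mulV.
Qed.

(** In a topologically principal groupoid, arrows whose source has trivial
    isotropy are dense, since [s] is an open map onto the unit space. *)
Lemma dense_trivial_isotropy_src :
  ample g -> topologically_principal g -> dense [set a | trivial_isotropy g (s a)].
Proof.
move=> [_ _ _ lhs _] tp V [x Vx] oV.
have [_ [Q [oQ QE]]] := lh_open_map lhs oV.
have [|u [Qu Tu]] := tp Q oQ; first by exists (s x); rewrite -QE; exists x.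
have : (s @` V) u by rewrite QE; split => //; case: Tu.
by move=> [a Va au]; exists a; split => //=; rewrite au.
Qed.

Lemma Tequiv_rho (f h : G -> bool) : ample g -> topologically_principal g ->
  Tequiv g f h -> rho f h.
Proof.
move=> am tp fh; apply: denseS (dense_trivial_isotropy_src am tp) => a Ta.
by apply: fh => //; exact: trivial_isotropy_rng.
Qed.

Lemma cluster_units_eq (t : G -> G) (K : set G) a b : units_hausdorff g ->
  continuous t -> (forall x, units g (t x)) ->
  cluster (within K (nbhs a)) b -> t a = t b.
Proof.
move=> hs ct tunits cl; apply: contrapT => tab.
have [P [Q [oP oQ Pa Qb PQ0]]] := hs _ _ (tunits a) (tunits b) tab.
have KaP : within K (nbhs a) (t @^-1` P).
  have aP : nbhs a (t @^-1` P) by apply: ct; exact: open_nbhs_nbhs.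
  by apply: filterS aP => y Py _.
have bQ : nbhs b (t @^-1` Q) by apply: ct; exact: open_nbhs_nbhs.
have [v [Pv Qv]] := cl _ _ KaP bQ.
by have : (P `&` Q `&` units g) (t v) by []; rewrite PQ0.
Qed.

(** Although [G] need not be Hausdorff, a compact set contains every arrow of
    its closure whose range has trivial isotropy. *)
Lemma compact_closure_trivial_isotropy (K : set G) a : ample g -> compact K ->
  closure K a -> trivial_isotropy g (r a) -> K a.
Proof.
move=> [[_ hs] _ _ lhs lhr] cK clKa [_ Tra].
have [b [Kb clb]] := cK _ (within_nbhs_proper clKa) (withinT K (@nbhs_filter G a)).
have sab := cluster_units_eq hs (lh_continuous lhs) (@src_src _ g) clb.
have rab := cluster_units_eq hs (lh_continuous lhr) (@units_rng _ g) clb.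
have iso : mul a (inv b) = r a.
  by apply: Tra; rewrite ?src_mul ?rng_mul ?rng_inv ?src_inv.
by rewrite -[a](gmulVKr sab) iso rab mul_rng.
Qed.

(** Under [rho], the support of a Steinberg function [h] contains every arrow
    of the support of [f] whose range has trivial isotropy: such an arrow lies
    in the closure of the compact set [supp h]. *)
Lemma rho_support_trivial_isotropy (f h : G -> bool) a : ample g ->
  steinberg g f -> steinberg g h -> rho f h ->
  trivial_isotropy g (r a) -> f a -> h a.
Proof.
move=> am sf [n [V [hV hE]]] fh Ta fa.
have Kh x : (\bigcup_(j < n) V j) x <-> h x by split => /hE.
apply/Kh; apply: compact_closure_trivial_isotropy am _ _ Ta.
  rewrite bigcup_mkord; apply: bigsetU_compact => j _.
  by case: (hV j (ltn_ord j)).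
move=> B /open_nbhs_subset [B' [oB' B'a B'B]].
have [|y [[B'y fy] fhy]] := fh (B' `&` [set x | f x]) _
  (openI oB' (steinberg_support_open sf)); first by exists a.
by exists y; split; [apply/Kh; rewrite -fhy | exact: B'B].
Qed.
End TrivialIsotropy.

Theorem lemma3p7 (G : topologicalType) (g : groupoid G) :
  ample g ->
  congruence g (@rho G) /\
  (topologically_principal g ->
     forall f h, steinberg g f -> steinberg g h -> (rho f h <-> Tequiv g f h)).
Proof.
move=> am; split; first exact: rho_congruence.
move=> tp f h sf sh; split; last exact: Tequiv_rho.
move=> fh a _ Tra; have hf : rho h f by apply: denseS fh => x /= ->.
apply/idP/idP; first exact: (rho_support_trivial_isotropy am sf sh fh Tra).
exact: (rho_support_trivial_isotropy am sh sf hf Tra).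
Qed.
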